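(* Let $M$ be a matroid on a finite set $E$ with $r(M)>0$. Then $\cup F(M)=\cup\mathcal{B}(M)$.
   Context: For a matroid $M$: $\mathcal{I}(M)$ its independent sets, $\mathcal{B}(M)$ its bases, $r(M)$ the size of a base, $r(X)$ the rank of $X\subseteq E$. For a set family $S$, $\cup S=\bigcup_{X\in S}X$. $s(M)=\{A\in\mathcal{I}(M): |A|=r(M)-1\}$; $K_M(X)=\{a\in E: r(X\cup\{a\})=r(X)+1\}$; $F(M)=\{K_M(X): X\in s(M)\}$. *)

From mathcomp Require Import all_boot.
Set Implicit Arguments. Unset Strict Implicit. Unset Printing Implicit Defensive.

(* A matroid on a finite ground set E (the finType T), given by its
   independent sets (standard independence axioms I1-I3). *)
Record matroid (T : finType) := Matroid {
  indep : {set T} -> bool;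
  indep0 : indep set0;
  indep_sub : forall A B : {set T}, A \subset B -> indep B -> indep A;
  indep_aug : forall A B : {set T}, indep A -> indep B -> #|A| < #|B| ->
      exists2 x, x \in B :\: A & indep (x |: A)
}.

Section MatroidDefs.
Variables (T : finType) (M : matroid T).

Definition mrank (X : {set T}) : nat :=
  \max_(A : {set T} | (A \subset X) && indep M A) #|A|.

Definition rankM : nat := mrank [set: T].

Definition bases : {set {set T}} := [set B | maxset (indep M) B].

Definition sM : {set {set T}} := [set A | indep M A & #|A| == rankM.-1].

Definition KM (X : {set T}) : {set T} :=
  [set a | mrank (a |: X) == (mrank X).+1].

Definition FM : {set {set T}} := [set KM X | X in sM].

End MatroidDefs.

From mathcomp Require Import all_boot.
Set Implicit Arguments. Unset Strict Implicit. Unset Printing Implicit Defensive.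

(* An element of some K_M(X) is not a loop, since adding a loop cannot raise
   the rank, and a non-loop {a} extends to a basis. Conversely, for a in a basis B, the set B - a lies in s(M) and
   a raises its rank. *)

Section MatroidRank.
Variables (T : finType) (M : matroid T).

Lemma mrank_indep (A : {set T}) : indep M A -> mrank M A = #|A|.
Proof.
move=> iA; apply/eqP; rewrite eqn_leq; apply/andP; split.
  by apply/bigmax_leqP => S /andP[sSA _]; apply: subset_leq_card.
by apply: (leq_bigmax_cond A); rewrite subxx iA.
Qed.

Lemma mrank_witness (X : {set T}) :
  exists2 A : {set T}, (A \subset X) && indep M A & mrank M X = #|A|.
Proof.
have ne : 0 < #|[pred S : {set T} | (S \subset X) && indep M S]|.
  by apply/card_gt0P; exists set0; rewrite inE sub0set indep0.
by have [A PA eA] := eq_bigmax_cond (fun S : {set T} => #|S|) ne; exists A.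
Qed.

Lemma basis_indep (B : {set T}) : B \in bases M -> indep M B.
Proof. by rewrite inE => /maxsetP[]. Qed.

Lemma card_basis (B : {set T}) : B \in bases M -> #|B| = rankM M.
Proof.
rewrite inE => /maxsetP[iB maxB].
have [A /andP[_ iA] eA] := mrank_witness [set: T].
rewrite /rankM eA; apply/eqP; rewrite eqn_leq; apply/andP; split.
  by rewrite -eA; apply: (leq_bigmax_cond B); rewrite subsetT iB.
rewrite leqNgt; apply/negP => ltBA.
have [x xAB ixB] := indep_aug iB iA ltBA.
have xB : x \in B by rewrite -(maxB _ ixB (subsetUr _ _)) setU11.
by move: xAB; rewrite inE xB.
Qed.

Lemma mrank_setU1_loop (a : T) (X : {set T}) :
  ~~ indep M [set a] -> mrank M (a |: X) <= mrank M X.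
Proof.
move=> loop_a; apply/bigmax_leqP => S /andP[sSaX iS].
apply: (leq_bigmax_cond S); rewrite iS andbT.
apply/subsetP => y yS; move/subsetP/(_ y yS): sSaX; rewrite in_setU1.
case/orP=> [/eqP eya | //]; case/negP: loop_a.
by apply: indep_sub iS; rewrite sub1set -eya.
Qed.

Lemma indep1_KM (a : T) (X : {set T}) : a \in KM M X -> indep M [set a].
Proof.
rewrite inE => /eqP eK; apply/negPn/negP => loop_a.
by have := mrank_setU1_loop X loop_a; rewrite eK ltnn.
Qed.

Lemma indep1_cover_bases (a : T) :
  indep M [set a] -> a \in cover (bases M).
Proof.
move=> ia; have [B maxB saB] := maxset_exists ia.
by apply/bigcupP; exists B; rewrite ?inE // -sub1set.
Qed.

Lemma basis_setD1_sM (B : {set T}) (a : T) :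
  B \in bases M -> a \in B -> B :\ a \in sM M.
Proof.
move=> bB aB; rewrite inE (indep_sub (subD1set B a) (basis_indep bB)) /= -(card_basis bB).
by rewrite (cardsD1 a B) aB.
Qed.

Lemma basis_mem_KM_setD1 (B : {set T}) (a : T) :
  B \in bases M -> a \in B -> a \in KM M (B :\ a).
Proof.
move=> bB aB; have iB := basis_indep bB.
have iBa := indep_sub (subD1set B a) iB.
by rewrite inE setD1K // !mrank_indep // (cardsD1 a B) aB.
Qed.

End MatroidRank.

Theorem proposition3 (T : finType) (M : matroid T) :
  0 < rankM M -> cover (FM M) = cover (bases M).
Proof.
move=> _; apply/setP => a; apply/idP/idP.
  case/bigcupP=> K /imsetP[X _ ->] aK.
  exact/indep1_cover_bases/(indep1_KM aK).
case/bigcupP=> B bB aB; apply/bigcupP; exists (KM M (B :\ a)).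
  exact/imsetP/(ex_intro2 _ _ (B :\ a) (basis_setD1_sM bB aB) erefl).
exact: basis_mem_KM_setD1.
Qed.
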